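(* Let $D$ be a strong digraph with $D\in\mathcal{LE}_2$. Then $2\leq \overrightarrow{\chi}(D)\leq 3$.
   Context: All digraphs are finite, without loops or multiple arcs. Paths and cycles are directed; the length of a path or cycle is its number of arcs. The dichromatic number $\overrightarrow{\chi}(D)$ is the least $k$ such that $V(D)$ can be partitioned into $k$ classes each inducing an acyclic subdigraph (one with no directed cycle; a pair of opposite arcs counts as a directed cycle of length 2). A digraph is strong if for every ordered pair of vertices $x,y$ there is a directed path from $x$ to $y$. For a subdigraph $H$ of a digraph $D$, an ear of $H$ in $D$ is either a directed path in $D$ whose two end vertices lie in $H$ and whose internal vertices do not lie in $H$, or a directed cycle in $D$ having exactly one vertex in $H$. An ear decomposition of a strong digraph $D$ is a sequence $(D_0,D_1,\ldots,D_k)$ of strong subdigraphs of $D$ such that $D_0$ is a directed cycle, $D_{j+1}=D_j\cup P_j$ where $P_j$ is an ear of $D_j$ in $D$ for every $j\in\{0,\ldots,k-1\}$, and $D_k=D$. For an integer $i\geq 1$, $\mathcal{LE}_i$ denotes the family of strong digraphs having an ear decomposition in which every ear has length at least $i$. *)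

From mathcomp Require Import all_boot.
From mathcomp Require Import boolp.
Set Implicit Arguments. Unset Strict Implicit. Unset Printing Implicit Defensive.

(* A digraph is a finite vertex type T with an arc relation e : rel T
   (no loops is imposed as irreflexive e in the theorem; multiple arcs are
   impossible by construction). *)

Section Digraphs.
Variables (T : finType) (e : rel T).

(* directed cycle of D, given by its cyclic vertex sequence;
   length = size c (>= 2, a 2-cycle is a pair of opposite arcs) *)
Definition dcycle (c : seq T) : bool := [&& uniq c, 1 < size c & cycle e c].

(* directed path of D with vertex sequence x :: p; length = size p *)
Definition dpath (x : T) (p : seq T) : bool := uniq (x :: p) && path e x p.

Definition strong : Prop := forall x y : T, connect e x y.

Definition acyclic_set (S : {set T}) : Prop :=
  forall c : seq T, dcycle c -> ~ {subset c <= S}.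

Definition dicolorable (k : nat) : Prop :=
  exists f : T -> 'I_k, forall i : 'I_k, acyclic_set [set x | f x == i].

Lemma dicolorable_card : dicolorable #|T|.
Proof.
exists (fun x => enum_rank x) => i c /and3P [Hu Hs _] Hsub.
case: c Hu Hs Hsub => [|a [|b c]] //= /andP [Ha _] _ Hsub.
have Ha' := Hsub a (mem_head _ _).
have Hb' : b \in [set x | enum_rank x == i] by apply: Hsub; rewrite !inE eqxx orbT.
move: Ha' Hb'; rewrite !inE => /eqP Ha' /eqP Hb'.
move: Ha; rewrite inE; suff -> : a = b by rewrite eqxx.
by apply: enum_rank_inj; rewrite Ha' Hb'.
Qed.

Lemma ex_dicolorable : exists k, `[< dicolorable k >].
Proof. by exists #|T|; apply/asboolP; exact: dicolorable_card. Qed.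

Definition dichromatic : nat := ex_minn ex_dicolorable.

Definition subdigraph := ({set T} * {set T * T})%type.

Definition whole : subdigraph := (setT, [set a | e a.1 a.2]).

Definition sub_union (H1 H2 : subdigraph) : subdigraph :=
  (H1.1 :|: H2.1, H1.2 :|: H2.2).

Definition strong_sub (H : subdigraph) : Prop :=
  forall x y, x \in H.1 -> y \in H.1 -> connect [rel u v | (u, v) \in H.2] x y.

Definition path_sub (x : T) (p : seq T) : subdigraph :=
  ([set v in x :: p], [set a in zip (x :: p) p]).

Definition cycle_sub (c : seq T) : subdigraph :=
  ([set v in c], [set a in zip c (rot 1 c)]).

Definition is_ear (H P : subdigraph) (len : nat) : Prop :=
  (exists (x : T) (p : seq T),
      [/\ dpath x p /\ 0 < size p, len = size p, P = path_sub x p,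
          x \in H.1 /\ last x p \in H.1 &
          forall v, v \in p -> v != last x p -> v \notin H.1])
  \/
  (exists c : seq T,
      [/\ dcycle c, len = size c, P = cycle_sub c &
          #|[set v in c] :&: H.1| = 1]).

(* D_j = D_0 ∪ P_0 ∪ ... ∪ P_{j-1} *)
Definition ear_stage (D0 : subdigraph) (Ps : seq subdigraph) (j : nat) :=
  foldl sub_union D0 (take j Ps).

Definition LE (i : nat) : Prop :=
  exists (c : seq T) (Ps : seq subdigraph),
    [/\ dcycle c,
        forall j, j < size Ps ->
          exists len, i <= len /\
            is_ear (ear_stage (cycle_sub c) Ps j) (nth whole Ps j) len,
        forall j, j <= size Ps -> strong_sub (ear_stage (cycle_sub c) Ps j) &
        ear_stage (cycle_sub c) Ps (size Ps) = whole].

End Digraphs.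

From mathcomp Require Import all_boot.
From mathcomp Require Import boolp.
Set Implicit Arguments. Unset Strict Implicit. Unset Printing Implicit Defensive.

(* Two colours already suffice.  Colour the vertices so that every directed
   cycle of the current stage sees both colours, and give all interior
   vertices of a new ear (there is at least one, as the ear has length >= 2)
   the colour opposite to its first vertex x.  Interior vertices are new, so
   their only in-arcs are ear arcs; walking backwards along a cycle from an
   interior vertex therefore reaches x, and the cycle sees both colours.  The
   lower bound comes from the initial cycle. *)

Lemma drop_zip (S U : eqType) k (s : seq S) (t : seq U) :
  drop k (zip s t) = zip (drop k s) (drop k t).
Proof. by elim: k s t => [|k IH] [|x s] [|y t] //=; case: drop. Qed.

Lemma take_zip (S U : eqType) k (s : seq S) (t : seq U) :
  take k (zip s t) = zip (take k s) (take k t).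
Proof. by elim: k s t => [|k IH] [|x s] [|y t] //=; rewrite IH. Qed.

Lemma zip_rot (S U : eqType) k (s : seq S) (t : seq U) : size s = size t ->
  zip (rot k s) (rot k t) = rot k (zip s t).
Proof.
by move=> eq_st; rewrite /rot zip_cat ?size_drop ?eq_st // drop_zip take_zip.
Qed.

Lemma mem_zip_snd (S U : eqType) (s : seq S) (t : seq U) a :
  a \in zip s t -> a.2 \in t.
Proof.
elim: s t => [|x s IH] [|y t] //=.
by rewrite !inE => /orP [/eqP -> | /IH ->]; rewrite ?eqxx ?orbT.
Qed.

Section TwoColouring.
Variable T : finType.

(* [c] is read as a closed walk in which each [v] is entered from [prev c v]. *)
Definition breaks_cycles (A : {set T * T}) (f : T -> bool) :=
  forall c : seq T, c != [::] -> {in c, forall v, (prev c v, v) \in A} ->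
  exists u v, [/\ u \in c, v \in c & f u != f v].

(* The arcs of the walk [x :: rcons r y]; [r] is the interior of the ear. *)
Definition ear_arcs (x : T) (r : seq T) (y : T) : {set T * T} :=
  [set a in zip (x :: r) (rcons r y)].

Lemma ear_arcs_nth x r y u v : (u, v) \in ear_arcs x r y ->
  exists2 j, j <= size r & u = nth x (x :: r) j /\ v = nth x (rcons r y) j.
Proof.
rewrite inE => /(nthP (x, x)) [j]; rewrite size_zip /= size_rcons minnn => lt_j.
by rewrite nth_zip ?size_rcons // => -[<- <-]; exists j.
Qed.

Lemma ear_arcs_touch x r y u v : r != [::] ->
  (u, v) \in ear_arcs x r y -> (u \in r) || (v \in r).
Proof.
move=> r0 /ear_arcs_nth [j le_j [-> ->]].
case: ltngtP le_j => // [lt_j _ | -> _].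
  by rewrite nth_rcons lt_j mem_nth ?orbT.
by case: r r0 => // a r _; rewrite (nth_last x (x :: a :: r)) /= mem_last.
Qed.

Lemma ear_arcs_into x r y u i : uniq (rcons r y) -> i < size r ->
  (u, nth x r i) \in ear_arcs x r y -> u = nth x (x :: r) i.
Proof.
move=> uniq_ry lt_i /ear_arcs_nth [j le_j [-> eq_v]].
have lt_ir : i < size (rcons r y) by rewrite size_rcons ltnW.
have lt_jr : j < size (rcons r y) by rewrite size_rcons.
suff /eqP -> : j == i by [].
by rewrite -(nth_uniq x lt_jr lt_ir uniq_ry) -eq_v nth_rcons lt_i.
Qed.

Section EarExtension.
Variables (V : {set T}) (A : {set T * T}) (x y : T) (r : seq T).
Hypotheses (heads_A : forall a, a \in A -> a.2 \in V)
           (r_outside : {in r, forall v, v \notin V})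
           (uniq_ry : uniq (rcons r y)).

Lemma ear_cycle_through_root c :
  {in c, forall v, (prev c v, v) \in A :|: ear_arcs x r y} ->
  has (mem r) c -> x \in c.
Proof.
move=> c_arcs /hasP [w w_c w_r].
suff root_i i : i < size r -> nth x r i \in c -> x \in c.
  by apply: (root_i (index w r)); rewrite ?index_mem ?nth_index.
elim: i => [|i IH] lt_i ri_c.
all: have := c_arcs _ ri_c; rewrite in_setU => /orP [/heads_A | /ear_arcs_into].
all: rewrite ?(negbTE (r_outside (mem_nth x lt_i))) //.
all: move=> /(_ uniq_ry lt_i) /= prev_ri.
  by rewrite -prev_ri mem_prev.
by apply: IH (ltnW lt_i) _; rewrite -prev_ri mem_prev.
Qed.

Lemma breaks_cycles_ear f : breaks_cycles A f -> x \notin r -> r != [::] ->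
  breaks_cycles (A :|: ear_arcs x r y) (fun v => if v \in r then ~~ f x else f v).
Proof.
move=> f_breaks x_r r0 c c0 c_arcs.
case: (boolP (has (mem r) c)) => [c_r | /hasPn c_off_r].
  have x_c := ear_cycle_through_root c_arcs c_r.
  case/hasP: c_r => w w_c w_r; exists x, w.
  by rewrite (negbTE x_r) (w_r : w \in r); case: (f x).
have {}c_off_r : {in c, forall v, v \notin r} := c_off_r.
have [|u [v [u_c v_c fuv]]] := f_breaks c c0.
  move=> v v_c; have := c_arcs v v_c.
  rewrite in_setU => /orP [//|/(ear_arcs_touch r0)].
  by rewrite (negbTE (c_off_r _ v_c)) (negbTE (c_off_r _ _)) // mem_prev.
by exists u, v; rewrite (negbTE (c_off_r _ u_c)) (negbTE (c_off_r _ v_c)).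
Qed.

End EarExtension.

Definition heads_in_vertices (H : subdigraph T) :=
  forall a, a \in H.2 -> a.2 \in H.1.

Lemma heads_in_vertices_union H1 H2 :
  heads_in_vertices H1 -> heads_in_vertices H2 -> heads_in_vertices (sub_union H1 H2).
Proof. by move=> h1 h2 a; rewrite !in_setU => /orP [/h1 | /h2] ->; rewrite ?orbT. Qed.

Lemma cycle_sub_rot k (c : seq T) : (cycle_sub (rot k c)).2 = (cycle_sub c).2.
Proof. by apply/setP => a; rewrite !inE rot_rot zip_rot ?size_rot // mem_rot. Qed.

Lemma cycle_sub_ear (x : T) r : (cycle_sub (x :: r)).2 = ear_arcs x r x.
Proof. by rewrite /cycle_sub /= rot1_cons. Qed.

Lemma path_sub_ear (x : T) r y : (path_sub x (rcons r y)).2 = ear_arcs x r y.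
Proof.
rewrite /path_sub /ear_arcs /= -rcons_cons -cats1 -[rcons r y]cats0.
by rewrite zip_cat ?size_rcons ?cats0.
Qed.

Variable e : rel T.

Lemma is_ear_heads H P len : is_ear e H P len -> heads_in_vertices P.
Proof.
case=> [[x [p [_ _ -> _ _]]] | [c [_ _ -> _]]] a; rewrite !inE => /mem_zip_snd.
  by move=> ->; rewrite orbT.
by rewrite mem_rot.
Qed.

Lemma is_ear_normal H P len : is_ear e H P len -> 1 < len ->
  exists x r y, [/\ P.2 = ear_arcs x r y, x \notin r, r != [::],
                    uniq (rcons r y) & {in r, forall v, v \notin H.1}].
Proof.
case=> [[x [p [[/andP [uniq_xp _] _] -> -> _ interior]]] |
        [c [/and3P [uniq_c size_c _] -> -> /eqP/cards1P [x cH]]]] len2.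
  case/lastP: p uniq_xp interior len2 => [//|r y].
  rewrite last_rcons size_rcons ltnS lt0n size_eq0 /=.
  move=> /andP [x_ry uniq_ry] interior r0.
  exists x, r, y; split => //; first exact: path_sub_ear.
    by apply: contra x_ry; rewrite mem_rcons inE => ->; rewrite orbT.
  move=> v v_r; apply: interior; first by rewrite mem_rcons inE v_r orbT.
  by apply: contraTneq v_r => ->; move: uniq_ry; rewrite rcons_uniq => /andP [].
have x_c : x \in c by have := set11 x; rewrite -cH !inE => /andP [].
have [r rot_c] : exists r, rot (index x c) c = x :: r := ex_intro _ _ (rot_index x_c).
have uniq_xr : uniq (x :: r) by rewrite -rot_c rot_uniq.
exists x, r, x; split.
- by rewrite -(cycle_sub_rot (index x c)) rot_c cycle_sub_ear.
- by case/andP: uniq_xr.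
- by apply: contraTneq size_c => r0; rewrite -(size_rot (index x c)) rot_c r0.
- by rewrite rcons_uniq.
move=> v v_r; apply/negP => v_H.
have : v \in [set x] by rewrite -cH !inE v_H -(mem_rot (index x c)) rot_c inE v_r orbT.
by rewrite inE => /eqP v_x; case/andP: uniq_xr; rewrite -v_x v_r.
Qed.

Lemma ear_breaks_cycles H P len f :
  heads_in_vertices H -> breaks_cycles H.2 f -> is_ear e H P len -> 1 < len ->
  exists f', breaks_cycles (H.2 :|: P.2) f'.
Proof.
move=> heads_H f_breaks /is_ear_normal/[apply] [[x [r [y [-> x_r r0 uniq_ry r_out]]]]].
by eexists; apply: breaks_cycles_ear heads_H r_out uniq_ry f f_breaks x_r r0.
Qed.

Lemma ear_stageS (D0 : subdigraph T) Ps d j : j < size Ps ->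
  ear_stage D0 Ps j.+1 = sub_union (ear_stage D0 Ps j) (nth d Ps j).
Proof. by move=> lt_j; rewrite /ear_stage (take_nth d) // foldl_rcons. Qed.

Lemma breaks_cycles_set0 (f : T -> bool) : breaks_cycles set0 f.
Proof. by case=> [|v c] // _ /(_ v (mem_head _ _)); rewrite inE. Qed.

Lemma cycle_ear_on_vertex c x :
  dcycle e c -> x \in c -> is_ear e ([set x], set0) (cycle_sub c) (size c).
Proof.
move=> c_cycle x_c; right; exists c; split => //.
apply/eqP/cards1P; exists x; apply/setP => v; rewrite !inE andbC.
by case: eqP => // ->.
Qed.

Lemma LE2_breaks_cycles : LE e 2 -> exists f, breaks_cycles (whole e).2 f.
Proof.
case=> c0 [Ps [c0_cycle ears _ <-]]; set stage := ear_stage (cycle_sub c0) Ps.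
suff stage_j j : j <= size Ps ->
    heads_in_vertices (stage j) /\ exists f, breaks_cycles (stage j).2 f.
  by case: (stage_j _ (leqnn _)).
elim: j => [_ | j IH lt_j].
  have [x0 x0_c0] : exists x0, x0 \in c0.
    by case: c0 c0_cycle {ears stage} => // x0 s; exists x0; rewrite mem_head.
  have ear0 := cycle_ear_on_vertex c0_cycle x0_c0.
  have [|||f f_breaks] := ear_breaks_cycles (f := xpred0) _ _ ear0 _.
  - by move=> a; rewrite inE.
  - exact: breaks_cycles_set0.
  - by case/and3P: c0_cycle.
  rewrite /stage /ear_stage take0; split; first exact: is_ear_heads ear0.
  by exists f; rewrite -[(cycle_sub c0).2]set0U.
have [heads_j [f f_breaks]] := IH (ltnW lt_j).
have [len [len2 ear_j]] := ears j lt_j.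
rewrite /stage (@ear_stageS _ _ (whole e)) //; split.
  exact: heads_in_vertices_union heads_j (is_ear_heads ear_j).
exact: ear_breaks_cycles heads_j f_breaks ear_j len2.
Qed.

Lemma breaks_cycles_dicolorable f : breaks_cycles (whole e).2 f -> dicolorable e 2.
Proof.
move=> f_breaks; exists (fun v => if f v then ord_max else ord0).
move=> i c /and3P [_ c2 c_cycle] c_i.
have [||u [v [u_c v_c fuv]]] := f_breaks c.
- by case: c c2 {c_cycle c_i}.
- by move=> v v_c; rewrite inE /=; exact: prev_cycle.
move: (c_i u u_c) (c_i v v_c); rewrite !inE.
by case: (f u) (f v) fuv => [] [] //= _ /eqP <- /eqP /(congr1 val).
Qed.

Lemma dicolorable_dichromatic : dicolorable e (dichromatic e).
Proof. by rewrite /dichromatic; case: ex_minnP => m /asboolP. Qed.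

Lemma dichromatic_le k : dicolorable e k -> dichromatic e <= k.
Proof.
by move=> col_k; rewrite /dichromatic; case: ex_minnP => m _; apply; apply/asboolP.
Qed.

Lemma dichromatic_gt1 c : dcycle e c -> 1 < dichromatic e.
Proof.
move=> c_cycle; have := dicolorable_dichromatic.
case: (dichromatic e) => [|[|k]] // [g g_acyclic].
  by case: c c_cycle => // x _ _; case: (g x).
case: (g_acyclic ord0 c c_cycle) => v _; rewrite inE; apply/eqP/val_inj.
by case: (g v) => [[|n]].
Qed.

End TwoColouring.

Theorem mainTheorem15 (T : finType) (e : rel T) :
  irreflexive e -> strong e -> LE e 2 -> 2 <= dichromatic e <= 3.
Proof.
move=> _ _ LE2; have [c0 [_ [c0_cycle _ _ _]]] := LE2.
have [f f_breaks] := LE2_breaks_cycles LE2.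
rewrite (dichromatic_gt1 c0_cycle) /=.
exact: leq_trans (dichromatic_le (breaks_cycles_dicolorable f_breaks)) _.
Qed.
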